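(* Let $N=2$ with $Q=\{A,B\}$. For every $k>4L$, every window string $\vec n=(n_1,\dots,n_k)$ with $L\ge n_1\ge\cdots\ge n_k\ge1$, every $\vec q\in Q^k$ and every $\mu\in\{0,1\}^{k-1}$, the string $\vec n$ contains five equal consecutive entries $n_{i-2}=\cdots=n_{i+2}$, and consequently there exist $\vec n'$ (of length $k-2$, obtained from $\vec n$ by deleting two of these five entries), $\vec q'\in Q^{k-2}$, $\mu'\in\{0,1\}^{k-3}$ and a scalar $c$ independent of $U_1,\dots,U_L$ and $\tilde O$ with $\mathbf{T}^{(k)}_{\vec q;\mu}(\vec n)=c\,\mathbf{T}^{(k-2)}_{\vec q';\mu'}(\vec n')$. In particular all two-qubit control tensors reduce to those of order at most $4L$.
   Context: Fix integers $L\ge 1$ and $N\ge 1$, and a set $Q$ of $N$ qubit labels. For $q\in Q$ let $\sigma_z^{[q]}$ denote the Pauli-$Z$ operator acting on qubit $q$ tensored with the identity on all other qubits of $(\mathbb{C}^2)^{\otimes N}$. (Digital control) Let $U_1,\dots,U_L$ be arbitrary unitaries on $(\mathbb{C}^2)^{\otimes N}$ ($U_n$ is the control propagator, constant on the $n$-th time window), and let $\tilde O$ be an arbitrary Hermitian unitary operator on $(\mathbb{C}^2)^{\otimes N}$ (the toggling-frame observable). For $q\in Q$ and $n\in\{1,\dots,L\}$ define $\tilde h_q(n)=U_n^\dagger\sigma_z^{[q]}U_n$ and $\bar h_q(n)=-\tilde O^{-1}\tilde h_q(n)\tilde O$. For $k\ge1$, a window string $\vec n=(n_1,\dots,n_k)$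 with $L\ge n_1\ge\cdots\ge n_k\ge1$, a qubit string $\vec q=(q_1,\dots,q_k)\in Q^k$ and a sign string $\mu\in\{0,1\}^{k-1}$, the (window-framed) control tensor is $$\mathbf{T}^{(k)}_{\vec q;\mu}(\vec n)=\sum_{b\in\{0,1\}^k}(-1)^{\sum_{j=1}^{k-1}\mu_j b_{j+1}}\Big(\prod^{\downarrow}_{i:\,b_i=1}\bar h_{q_i}(n_i)\Big)\Big(\prod^{\uparrow}_{i:\,b_i=0}\tilde h_{q_i}(n_i)\Big),$$ where $\prod^{\downarrow}$ is the ordered product with the index $i$ decreasing from left to right, $\prod^{\uparrow}$ is the ordered product with $i$ increasing from left to right, and an empty product is the identity. When $N=1$ the qubit string is omitted and we write $\mathbf{T}^{(k)}_{\mu}(\vec n)$. *)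

From HB Require Import structures.
From mathcomp Require Import all_boot all_order all_algebra.
From mathcomp Require Import mxtens.
Set Implicit Arguments. Unset Strict Implicit. Unset Printing Implicit Defensive.
Import Order.TTheory GRing.Theory Num.Theory.
Local Open Scope ring_scope.

(* Two-qubit setting N = 2, Q = {A, B} encoded as 'I_2 (A = 0, B = 1).
   Operators on (C^2) (x) (C^2) are 4x4 matrices over a numeric closed
   field C (e.g. the complex numbers), basis |00>,|01>,|10>,|11>. *)

Section Defs.
Variable C : numClosedFieldType.

Definition adjmx (M : 'M[C]_4) : 'M[C]_4 := (map_mx Num.conj M)^T.

Definition unitary_mx (M : 'M[C]_4) : Prop :=
  adjmx M *m M = 1%:M /\ M *m adjmx M = 1%:M.

Definition hermitian_mx (M : 'M[C]_4) : Prop := adjmx M = M.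

Definition pauliZ : 'M[C]_2 := \matrix_(i, j) (if i == j then (-1) ^+ i else 0).

Definition sigz (q : 'I_2) : 'M[C]_4 :=
  if q == 0%R then (pauliZ *t (1%:M : 'M[C]_2) : 'M[C]_4)
  else ((1%:M : 'M[C]_2) *t pauliZ : 'M[C]_4).

Definition htilde (U : nat -> 'M[C]_4) (q : 'I_2) (n : nat) : 'M[C]_4 :=
  adjmx (U n) *m sigz q *m U n.

Definition hbar (U : nat -> 'M[C]_4) (O : 'M[C]_4) (q : 'I_2) (n : nat)
  : 'M[C]_4 :=
  - (invmx O *m htilde U q n *m O).

(* Strings are 0-indexed sequences:
   n = (n_1..n_k) is [:: nth 0 n 0; ...], mu_j = nth false mu (j-1), and
   b ranges over {0,1}^k as k-tuples of booleans. The sign exponent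
   sum_{j=1}^{k-1} mu_j b_{j+1} becomes sum_{j<k-1} mu_j b_{j+1}
   (0-indexed).  The first product is over i with b_i = 1, i decreasing
   from left to right (rev_ord); the second over i with b_i = 0, i
   increasing from left to right. *)
Definition ctensor (U : nat -> 'M[C]_4) (O : 'M[C]_4) (k : nat)
  (n : seq nat) (q : seq 'I_2) (mu : seq bool) : 'M[C]_4 :=
  \sum_(b : k.-tuple bool)
    ((-1) ^+ (\sum_(j < k.-1) (nth false mu j && nth false b j.+1))%N) *:
    ((\prod_(i < k | nth false b (rev_ord i))
        hbar U O (nth 0 q (rev_ord i)) (nth 0%N n (rev_ord i)))
     *m
     (\prod_(i < k | ~~ nth false b i)
        htilde U (nth 0 q i) (nth 0%N n i))).

End Defs.

Definition window_string (L k : nat) (n : seq nat) : Prop :=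
  size n = k /\ sorted geq n /\ all (fun m => (1 <= m <= L)%N) n.

Definition five_equal_at (n : seq nat) (i : nat) : Prop :=
  (2 <= i)%N /\ (i + 2 < size n)%N /\
  forall j, (i - 2 <= j <= i + 2)%N -> nth 0%N n j = nth 0%N n i.

Definition delete2 (T : Type) (s : seq T) (j1 j2 : nat) : seq T :=
  [seq x.2 | x <- zip (iota 0 (size s)) s & (x.1 != j1) && (x.1 != j2)].

From HB Require Import structures.
From mathcomp Require Import all_boot all_order all_algebra.
From mathcomp Require Import mxtens zify.
Import Order.TTheory GRing.Theory Num.Theory.
Set Implicit Arguments. Unset Strict Implicit. Unset Printing Implicit Defensive.
Local Open Scope ring_scope.

(* Write the control tensor as T = O W (O is a Hermitian unitary, so O^-1 = O).
   Splitting the sum over bit strings on the last bit shows that appending an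
   index j acts on W by the toggle W |-> W h_j - (-1)^mu_j h_j W, with
   h_j = htilde_(q_j)(n_j).  Toggles by commuting operators commute, and for an
   involution h two toggles of opposite signs compose to 0 while three of equal
   signs give 4 times one.  On five consecutive equal windows the h_j are
   commuting involutions and, with only two qubit labels, three of them
   coincide, so two of the five toggles can be dropped at the cost of a factor
   4 or 0.  A nonincreasing string of length > 4L with entries in [1, L] has
   five equal consecutive entries, since otherwise it would drop every four
   steps; iterating the reduction brings the order down to at most 4L. *)

Section Toggle.
Variable A : pzRingType.
Implicit Types (x y w : A) (b c : bool).

Definition toggle x b w := w * x - (-1) ^+ b * (x * w).

Lemma toggleMn x b w m : toggle x b (w *+ m) = toggle x b w *+ m.
Proof. by rewrite /toggle mulrnAl !mulrnAr mulrnBl. Qed.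

Lemma toggleC x y b c w : GRing.comm x y ->
  toggle x b (toggle y c w) = toggle y c (toggle x b w).
Proof.
move=> xy; have wyx : w * y * x = w * x * y by rewrite -!mulrA xy.
rewrite /toggle; case: b; case: c;
  rewrite !(mulrBl, mulrBr, mulN1r, mul1r, mulrN, mulNr, opprD, opprK) !mulrA;
  by rewrite xy wyx addrACA.
Qed.

Lemma toggle_sign_neq x b c w : x * x = 1 -> b != c ->
  toggle x b (toggle x c w) = 0.
Proof.
move=> xx; rewrite /toggle; case: b; case: c => //= _;
  rewrite !(mulrBl, mulrBr, mulN1r, mul1r, mulrN, mulNr, opprD, opprK) !mulrA;
  by rewrite xx -!mulrA xx mulr1 mul1r addrC addrA subrK ?subrr ?addNr.
Qed.

Lemma toggle_sign_eq3 x b w : x * x = 1 ->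
  toggle x b (toggle x b (toggle x b w)) = toggle x b w *+ 4.
Proof.
move=> xx; rewrite /toggle; case: b;
  rewrite !(mulrBl, mulrBr, mulN1r, mul1r, mulrN, mulNr, opprD, opprK) !mulrA;
  by rewrite xx -!mulrA xx ?mulr1 ?mul1r [_ + w * x]addrC -!mulr2n -mulrnA.
Qed.

Lemma toggle_sign3 x b1 b2 b3 w : x * x = 1 ->
  toggle x b3 (toggle x b2 (toggle x b1 w)) =
  toggle x b1 w *+ (if (b1 == b2) && (b2 == b3) then 4 else 0).
Proof.
move=> xx; have [<- /=|b12] := eqVneq b1 b2; last first.
  by rewrite (@toggle_sign_neq x b2 b1) 1?eq_sym // /toggle mul0r !mulr0 subrr.
have [<-|b23] := eqVneq b1 b3; first exact: toggle_sign_eq3.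
by rewrite toggle_sign_neq 1?eq_sym.
Qed.

Variable I : eqType.
Implicit Types (X : I -> A) (E : I -> bool) (s : seq I).

Definition toggles X E w s := foldl (fun w j => toggle (X j) (E j) w) w s.

Lemma toggles_cat X E w s1 s2 :
  toggles X E w (s1 ++ s2) = toggles X E (toggles X E w s1) s2.
Proof. exact: foldl_cat. Qed.

Lemma togglesMn X E w s m : toggles X E (w *+ m) s = toggles X E w s *+ m.
Proof. by elim: s w => //= j s IHs w; rewrite toggleMn IHs. Qed.

Lemma eq_in_toggles X X' E E' w s :
  {in s, X =1 X'} -> {in s, E =1 E'} -> toggles X E w s = toggles X' E' w s.
Proof.
elim: s w => //= j s IHs w XX' EE'; rewrite XX' ?EE' ?mem_head //.
by apply: IHs => i si; rewrite (XX', EE') // inE si orbT.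
Qed.

Lemma toggles_toggle X E w j s : {in s, forall i, GRing.comm (X j) (X i)} ->
  toggles X E (toggle (X j) (E j) w) s = toggle (X j) (E j) (toggles X E w s).
Proof.
elim: s w => //= i s IHs w comm_j.
rewrite toggleC; last by apply/commr_sym/comm_j; rewrite mem_head.
by rewrite IHs // => i' si'; apply: comm_j; rewrite inE si' orbT.
Qed.

Lemma toggles_perm X E w s s' : {in s &, forall i j, GRing.comm (X i) (X j)} ->
  perm_eq s s' -> toggles X E w s = toggles X E w s'.
Proof.
elim: s s' w => [|j s IHs] s' w comm_s; first by rewrite perm_sym => /perm_nilP ->.
move=> perm_js; have js' : j \in s' by rewrite -(perm_mem perm_js) mem_head.
case/splitPr: js' perm_js => s1 s2 perm_js.
have perm_s : perm_eq s (s1 ++ s2).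
  by rewrite -(perm_cons j) (perm_trans perm_js) // (perm_catCA s1 [:: j]).
have comm_j : {in s1 ++ s2, forall i, GRing.comm (X j) (X i)}.
  by move=> i; rewrite -(perm_mem perm_s) => si; apply: comm_s; rewrite ?inE ?si ?eqxx ?orbT.
rewrite /= (IHs _ _ _ perm_s); last by move=> i i' si si'; apply: comm_s; rewrite inE ?si ?si' orbT.
rewrite (toggles_toggle _ _ comm_j) toggles_cat [RHS]toggles_cat.
rewrite -(toggles_toggle _ _ (j := j) (s := s2)) //.
by move=> i si2; apply: comm_j; rewrite mem_cat si2 orbT.
Qed.

Lemma toggles_three X E w s p1 p2 p3 :
  uniq s -> {in s &, forall i j, GRing.comm (X i) (X j)} ->
  uniq [:: p1; p2; p3] -> {subset [:: p1; p2; p3] <= s} ->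
  X p1 = X p2 -> X p2 = X p3 -> X p1 * X p1 = 1 ->
  toggles X E w s =
  toggles X E w [seq j <- s | j \notin [:: p2; p3]]
    *+ (if (E p1 == E p2) && (E p2 == E p3) then 4 else 0).
Proof.
move=> uniq_s comm_s uniq_p sub_p X12 X23 inv_X.
set rest := [seq j <- s | j \notin [:: p1; p2; p3]].
have uniq_rest : uniq rest by rewrite filter_uniq.
have perm_s : perm_eq s ([:: p1; p2; p3] ++ rest).
  apply: uniq_perm => //.
    by rewrite cat_uniq uniq_p uniq_rest andbT; apply/hasPn => j; rewrite mem_filter => /andP[].
  move=> j; rewrite mem_cat mem_filter.
  by have [/sub_p ->|_] := boolP (j \in [:: p1; p2; p3]); rewrite ?andbT.
have perm_s' : perm_eq [seq j <- s | j \notin [:: p2; p3]] (p1 :: rest).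
  apply: uniq_perm; rewrite ?filter_uniq //= ?mem_filter ?inE ?eqxx ?uniq_rest //.
  move=> j; rewrite inE !mem_filter; have [->|nj1] /= := eqVneq j p1.
    by case/andP: uniq_p => -> _; rewrite sub_p ?mem_head.
  by rewrite !inE (negPf nj1).
have comm_s' : {in [seq j <- s | j \notin [:: p2; p3]] &, forall i j, GRing.comm (X i) (X j)}.
  by move=> i j; rewrite !mem_filter => /andP[_ si] /andP[_ sj]; apply: comm_s.
rewrite (toggles_perm _ _ comm_s perm_s) (toggles_perm _ _ comm_s' perm_s') /=.
by rewrite -X23 -X12 toggle_sign3 // togglesMn.
Qed.

Lemma toggles_three_in X E w s1 s2 s3 p1 p2 p3 :
  uniq (s1 ++ s2 ++ s3) -> {in s2 &, forall i j, GRing.comm (X i) (X j)} ->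
  uniq [:: p1; p2; p3] -> {subset [:: p1; p2; p3] <= s2} ->
  X p1 = X p2 -> X p2 = X p3 -> X p1 * X p1 = 1 ->
  toggles X E w (s1 ++ s2 ++ s3) =
  toggles X E w [seq j <- s1 ++ s2 ++ s3 | j \notin [:: p2; p3]]
    *+ (if (E p1 == E p2) && (E p2 == E p3) then 4 else 0).
Proof.
move=> uniq_s comm_s2 uniq_p sub_p X12 X23 inv_X.
have := uniq_s; rewrite (perm_uniq (permEl (perm_catCA s1 s2 s3))) cat_uniq.
case/and3P=> uniq_s2 /hasPn out_s2 _.
have keep_out s : {subset s <= s1 ++ s3} -> [seq j <- s | j \notin [:: p2; p3]] = s.
  move=> sub_s; apply/all_filterP/allP => j /sub_s/out_s2; apply: contra => p23j.
  by apply: sub_p; rewrite inE p23j orbT.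
have keep_s1 : [seq j <- s1 | j \notin [:: p2; p3]] = s1.
  by apply: keep_out => j s1j; rewrite mem_cat s1j.
have keep_s3 : [seq j <- s3 | j \notin [:: p2; p3]] = s3.
  by apply: keep_out => j s3j; rewrite mem_cat s3j orbT.
rewrite !filter_cat keep_s1 keep_s3 !toggles_cat.
by rewrite (toggles_three _ _ uniq_s2 comm_s2 uniq_p sub_p X12 X23 inv_X) togglesMn.
Qed.

End Toggle.

Lemma toggles_map (A : pzRingType) (I J : eqType) (X : I -> A) E w (f : J -> I) (s : seq J) :
  toggles X E w (map f s) = toggles (X \o f) (E \o f) w s.
Proof. by elim: s w => //= j s IHs w; rewrite IHs. Qed.

Section TupleRcons.
Variable T : Type.

Lemma tuple_rcons_bij k :
  bijective (fun p : k.-tuple T * T => [tuple of rcons p.1 p.2]).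
Proof.
pose split_last (b : k.+1.-tuple T) :=
  ([tuple of belast (thead b) (behead b)], last (thead b) (behead b)).
have theadK (b : k.+1.-tuple T) : thead b :: behead b = b by case: b => [[|y s]].
exists split_last => [[t x]|b]; last by apply: val_inj; rewrite /= -lastI theadK.
have := theadK [tuple of rcons t x]; rewrite lastI => /rcons_inj[belastE lastE].
by congr (_, _) => //; apply: val_inj.
Qed.
End TupleRcons.

Lemma big_tuple_rcons (T : finType) (V : nmodType) k (F : k.+1.-tuple T -> V) :
  \sum_(b : k.+1.-tuple T) F b = \sum_(t : k.-tuple T) \sum_(x : T) F [tuple of rcons t x].
Proof.
rewrite (reindex _ (onW_bij _ (tuple_rcons_bij T k))) /=.
by rewrite pair_bigA.
Qed.

Section CtensorAlg.
Variables (R : pzRingType) (A : algType R).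
Implicit Types (X Y : nat -> A) (mu : seq bool).

Definition ctensor_alg k X Y mu : A :=
  \sum_(b : k.-tuple bool)
    (-1) ^+ (\sum_(j < k.-1) (nth false mu j && nth false b j.+1))%N *:
    ((\prod_(i < k | nth false b (rev_ord i)) Y (rev_ord i)) *
     (\prod_(i < k | ~~ nth false b i) X i)).

(* The toggle of index j >= 1 carries the paper's mu_j (the coefficient of
   b_(j+1) in the sign, indices of b being 1-based); index 0 carries none. *)
Definition sign_bit mu j := nth false (false :: mu) j.

Lemma sign_exp_rcons k mu (t : k.-tuple bool) x :
  (\sum_(j < k) (nth false mu j && nth false (rcons t x) j.+1))%N =
  ((\sum_(j < k.-1) (nth false mu j && nth false t j.+1)) + (sign_bit mu k && x))%N.
Proof.
case: k t => [|k] t; first by rewrite !big_ord0.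
rewrite big_ord_recr /= nth_rcons size_tuple ltnn eqxx; congr (_ + _)%N.
by apply: eq_bigr => j _; rewrite nth_rcons size_tuple ltnS ltn_ord.
Qed.

Lemma prod_rev_rcons k Y (t : k.-tuple bool) x :
  \prod_(i < k.+1 | nth false (rcons t x) (rev_ord i)) Y (rev_ord i) =
  (if x then Y k else 1) * \prod_(i < k | nth false t (rev_ord i)) Y (rev_ord i).
Proof.
rewrite big_mkcond big_ord_recl /= subn1 /= nth_rcons size_tuple ltnn eqxx.
rewrite [in RHS]big_mkcond; congr (_ * _); apply: eq_bigr => i _.
rewrite /bump leq0n add1n subSS nth_rcons size_tuple.
by rewrite (_ : (k - i.+1 < k)%N = true) //; have := ltn_ord i; lia.
Qed.

Lemma prod_rcons k X (t : k.-tuple bool) x :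
  \prod_(i < k.+1 | ~~ nth false (rcons t x) i) X i =
  \prod_(i < k | ~~ nth false t i) X i * (if x then 1 else X k).
Proof.
rewrite big_mkcond big_ord_recr /= nth_rcons size_tuple ltnn eqxx.
rewrite [in RHS]big_mkcond; congr (_ * _); first apply: eq_bigr => i _.
  by rewrite /= nth_rcons size_tuple ltn_ord.
by case: x.
Qed.

Lemma ctensor_algS k X Y mu :
  ctensor_alg k.+1 X Y mu =
  (-1) ^+ sign_bit mu k *: (Y k * ctensor_alg k X Y mu) + ctensor_alg k X Y mu * X k.
Proof.
rewrite /ctensor_alg big_tuple_rcons mulr_sumr scaler_sumr mulr_suml -big_split /=.
apply: eq_bigr => t _; rewrite big_bool /=.
rewrite !sign_exp_rcons !prod_rev_rcons !prod_rcons /= andbT andbF addn0.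
rewrite mulr1 mul1r exprD -scalerA -scalerAr -scalerAl !mulrA.
by rewrite !scalerA -!exprD addnC.
Qed.

Lemma ctensor_alg_toggles k X Y mu (O : A) : O * O = 1 ->
  (forall i, Y i = - (O * X i * O)) ->
  ctensor_alg k X Y mu = O * toggles X (sign_bit mu) O (iota 0 k).
Proof.
move=> OO YE; elim: k => [|k IHk].
  rewrite /ctensor_alg /toggles /=.
  under eq_bigr => t _ do rewrite !big_ord0 expr0 scale1r mulr1.
  by rewrite sumr_const card_tuple expn0 OO.
rewrite ctensor_algS IHk YE -addn1 iotaD toggles_cat /= /toggle.
set W := toggles _ _ _ _.
have OXOW : O * X k * O * (O * W) = O * (X k * W).
  by rewrite -mulrA (mulrA O O) OO mul1r mulrA.
rewrite add0n mulNr OXOW scaler_sign mulr_sign mulrBr addrC.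
by case: (sign_bit mu k); rewrite ?mulrN ?opprK !mulrA.
Qed.
End CtensorAlg.

Lemma ctensorE (C : numClosedFieldType) (U : nat -> 'M[C]_4) O k n q mu :
  ctensor U O k n q mu =
  ctensor_alg k (fun i => htilde U (nth 0 q i) (nth 0%N n i))
                (fun i => hbar U O (nth 0 q i) (nth 0%N n i)) mu.
Proof. by []. Qed.

Section TensorProduct.
Variable R : comPzRingType.

Lemma tensmx11 m n : (1%:M : 'M[R]_m) *t (1%:M : 'M[R]_n) = 1%:M.
Proof.
apply/matrixP=> a b; case: (mxtens_indexP a) => i j; case: (mxtens_indexP b) => i' j'.
rewrite tensmxE !mxE (inj_eq (can_inj (@mxtens_indexK _ _))) xpair_eqE.
by case: (i == i'); case: (j == j'); rewrite ?mulr1 ?mulr0 ?mul0r.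
Qed.

Lemma tensmx_comm m n (A1 A2 : 'M[R]_m) (B1 B2 : 'M[R]_n) :
  A1 *m A2 = A2 *m A1 -> B1 *m B2 = B2 *m B1 ->
  (A1 *t B1) *m (A2 *t B2) = (A2 *t B2) *m (A1 *t B1).
Proof. by move=> A12 B12; rewrite !tensmx_mul A12 B12. Qed.

Lemma tensmx_invol m n (A : 'M[R]_m) (B : 'M[R]_n) :
  A *m A = 1%:M -> B *m B = 1%:M -> (A *t B) *m (A *t B) = 1%:M.
Proof. by move=> AA BB; rewrite tensmx_mul AA BB tensmx11. Qed.
End TensorProduct.

Section TwoQubits.
Variable C : numClosedFieldType.
Implicit Types (U : nat -> 'M[C]_4) (q r : 'I_2).

Lemma pauliZ_invol : pauliZ C *m pauliZ C = 1%:M.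
Proof.
apply/matrixP=> i j; rewrite !mxE !big_ord_recr big_ord0 /= !mxE add0r.
case: i => [[|[|?]] ?] //; case: j => [[|[|?]] ?] //=;
  by rewrite ?(mulr0, mul0r, addr0, add0r, mulr1, mulrNN).
Qed.

Lemma sigz_comm q r : sigz C q *m sigz C r = sigz C r *m sigz C q.
Proof.
by rewrite /sigz; case: (q == 0); case: (r == 0);
  apply: (@tensmx_comm _ 2 2); rewrite ?mulmx1 ?mul1mx.
Qed.

Lemma sigz_invol q : sigz C q *m sigz C q = 1%:M.
Proof.
by rewrite /sigz; case: (q == 0); apply: (@tensmx_invol _ 2 2); rewrite ?mulmx1 ?pauliZ_invol.
Qed.

Lemma htilde_mul U q r m : unitary_mx (U m) ->
  htilde U q m *m htilde U r m = adjmx (U m) *m (sigz C q *m sigz C r) *m U m.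
Proof.
case=> _ UU; rewrite /htilde !mulmxA -(mulmxA _ (U m) (adjmx _)) UU mulmx1.
by rewrite -!mulmxA.
Qed.

Lemma htilde_invol U q m : unitary_mx (U m) -> htilde U q m *m htilde U q m = 1%:M.
Proof. by move=> uU; rewrite htilde_mul // sigz_invol mulmx1; case: uU. Qed.

Lemma htilde_comm U q r m : unitary_mx (U m) ->
  htilde U q m *m htilde U r m = htilde U r m *m htilde U q m.
Proof. by move=> uU; rewrite !htilde_mul // sigz_comm. Qed.

Lemma hermitian_unitary_invol (O : 'M[C]_4) :
  hermitian_mx O -> unitary_mx O -> O *m O = 1%:M.
Proof. by move=> hO [OO _]; rewrite -{1}hO. Qed.

Lemma hermitian_unitary_invmx (O : 'M[C]_4) :
  hermitian_mx O -> unitary_mx O -> invmx O = O.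
Proof.
move=> hO uO; have OO := hermitian_unitary_invol hO uO.
by rewrite -[invmx O]mulmx1 -OO mulmxA mulVmx ?mul1mx //; case/mulmx1_unit: OO.
Qed.

Definition htilde_at U (n : seq nat) (q : seq 'I_2) j := htilde U (nth 0 q j) (nth 0%N n j).

Lemma ctensor_toggles U O k n (q : seq 'I_2) mu :
  hermitian_mx O -> unitary_mx O ->
  ctensor U O k n q mu = O *m toggles (htilde_at U n q) (sign_bit mu) O (iota 0 k).
Proof.
move=> hO uO; rewrite ctensorE; apply: ctensor_alg_toggles.
  exact: hermitian_unitary_invol.
by move=> i; rewrite /hbar hermitian_unitary_invmx.
Qed.

Lemma ctensor_restrict U O n (q : seq 'I_2) mu J :
  hermitian_mx O -> unitary_mx O ->
  O *m toggles (htilde_at U n q) (sign_bit mu) O (0%N :: J) =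
  ctensor U O (size J).+1 (map (nth 0%N n) (0%N :: J)) (map (nth 0 q) (0%N :: J))
    (map (sign_bit mu) J).
Proof.
move=> hO uO; rewrite ctensor_toggles //; congr (_ *m _).
rewrite -[in LHS](mkseq_nth 0%N (0%N :: J)) toggles_map.
apply: eq_in_toggles => p; rewrite mem_iota add0n => p_lt.
  by rewrite /htilde_at !(nth_map 0%N).
by case: p p_lt => [|p] // p_lt; rewrite /sign_bit /= (nth_map 0%N).
Qed.

End TwoQubits.

Section Strings.
Local Open Scope nat_scope.

Lemma pigeonhole_three (P : pred nat) a :
  exists p1 p2 p3, [/\ a <= p1, p1 < p2, p2 < p3, p3 < a + 5 & P p1 = P p2 /\ P p2 = P p3].
Proof.
have [b count_b] : exists b, 3 <= count (fun j => P j == b) (iota a 5).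
  have := count_predC P (iota a 5); rewrite size_iota.
  case: (leqP 3 (count P (iota a 5))) => P3; [exists true | exists false];
    rewrite ?(eq_count (fun j => eqb_id (P j))) ?(eq_count (fun j => eqbF_neg (P j)));
    rewrite -?[count (fun j => ~~ P j) _]/(count (predC P) _); lia.
set t := [seq j <- iota a 5 | P j == b].
have t_sorted : sorted ltn t := sorted_filter ltn_trans _ (iota_ltn_sorted a 5).
have size_t : 3 <= size t by rewrite size_filter.
have t_nth j : j < 3 -> [/\ a <= nth 0 t j, nth 0 t j < a + 5 & P (nth 0 t j) = b].
  move=> j3; have := mem_nth 0 (leq_trans j3 size_t).
  by rewrite mem_filter mem_iota => /and3P[/eqP].
have lt_nth i j : i < j < 3 -> nth 0 t i < nth 0 t j.
  case/andP=> ij j3; apply: (sorted_ltn_nth ltn_trans 0 t_sorted) => //;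
    rewrite inE; lia.
have [a_t0 _ P_t0] := t_nth 0 isT; have [_ _ P_t1] := t_nth 1 isT.
have [_ t2_a P_t2] := t_nth 2 isT.
by exists (nth 0 t 0), (nth 0 t 1), (nth 0 t 2); split; rewrite ?lt_nth ?P_t0 ?P_t1 ?P_t2.
Qed.

Lemma nonincreasing_plateau (f : nat -> nat) L :
  (forall t, t < L -> f t.+1 <= f t) -> f 0 <= L -> 0 < f L ->
  exists2 t, t < L & f t.+1 = f t.
Proof.
move=> f_dec f0 fL.
suff /(_ L (leqnn L)) [//|] : forall s, s <= L ->
    (exists2 t, t < s & f t.+1 = f t) \/ f s + s <= f 0 by lia.
elim=> [|s IHs] sL; first by right; rewrite addn0.
case: (IHs (ltnW sL)) => [[t ts ft]|fs]; first by left; exists t => //; lia.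
have [fSs|fSs] := eqVneq (f s.+1) (f s); first by left; exists s.
by right; have := f_dec s sL; lia.
Qed.

Section WindowStrings.
Variables (L k : nat) (n : seq nat).
Hypothesis n_window : window_string L k n.

Lemma window_string_nth_le a b : a <= b -> b < k -> nth 0 n b <= nth 0 n a.
Proof.
case: n_window => [size_n [n_sorted _]] ab bk.
apply: (sorted_leq_nth (rev_trans leq_trans) leqnn 0 n_sorted); rewrite // inE size_n; lia.
Qed.

Lemma window_string_nth_range a : a < k -> 1 <= nth 0 n a <= L.
Proof. by case: n_window => [size_n [_ /all_nthP n_range]] ak; apply: n_range; rewrite size_n. Qed.

Lemma window_string_five_equal : 4 * L < k -> exists i, five_equal_at n i.
Proof.
move=> Lk; have [size_n _] := n_window.
have [|||t tL n_eq] := nonincreasing_plateau (f := fun t => nth 0 n (4 * t)) (L := L).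
- by move=> t tL; apply: window_string_nth_le; lia.
- by have := window_string_nth_range (a := 0); rewrite muln0; lia.
- by have := window_string_nth_range (a := 4 * L); lia.
exists (4 * t + 2); do !split; [lia | rewrite size_n; lia | move=> j /andP[j_lo j_hi]].
have := @window_string_nth_le (4 * t) j; have := @window_string_nth_le j (4 * t.+1).
have := @window_string_nth_le (4 * t) (4 * t + 2).
have := @window_string_nth_le (4 * t + 2) (4 * t.+1).
lia.
Qed.
End WindowStrings.

Lemma delete2E (T : Type) (x0 : T) (s : seq T) j1 j2 :
  delete2 s j1 j2 = [seq nth x0 s j | j <- iota 0 (size s) & j \notin [:: j1; j2]].
Proof.
have zipE : zip (iota 0 (size s)) s = [seq (j, nth x0 s j) | j <- iota 0 (size s)].
  by rewrite -{2}(mkseq_nth x0 s) /mkseq; elim: (iota 0 _) => //= j l ->.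
rewrite /delete2 zipE filter_map -map_comp; congr map; apply: eq_filter => j /=.
by rewrite !inE negb_or.
Qed.

Lemma size_iota_notin2 k j1 j2 : j1 != j2 -> j1 < k -> j2 < k ->
  size [seq j <- iota 0 k | j \notin [:: j1; j2]] = k - 2.
Proof.
move=> j12 j1k j2k; rewrite size_filter.
have := count_predC (mem [:: j1; j2]) (iota 0 k); rewrite size_iota.
have -> : count (mem [:: j1; j2]) (iota 0 k) = 2.
  have := count_predUI (pred1 j1) (pred1 j2) (iota 0 k).
  rewrite !count_uniq_mem ?iota_uniq // !mem_iota !leq0n add0n j1k j2k /=.
  rewrite (@eq_count _ (predI _ _) pred0) ?count_pred0 => [|j]; last first.
    by apply/negbTE/andP => -[/eqP -> /eqP e]; rewrite e eqxx in j12.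
  rewrite addn0 => count_U.
  by rewrite -[2]/(1 + 1) -count_U; apply: eq_count => j; rewrite !inE.
rewrite -[count (fun j => _) _]/(count (predC (mem [:: j1; j2])) _); lia.
Qed.

Lemma window_string_delete2 L k n j1 j2 : window_string L k n ->
  j1 != j2 -> j1 < k -> j2 < k -> window_string L (k - 2) (delete2 n j1 j2).
Proof.
move=> n_window j12 j1k j2k; have [size_n [n_sorted _]] := n_window.
rewrite (delete2E 0) size_n; split; first by rewrite size_map size_iota_notin2.
split.
  apply: (subseq_sorted (rev_trans leq_trans) _ n_sorted).
  rewrite -[n in subseq _ n](mkseq_nth 0) size_n.
  exact/map_subseq/filter_subseq.
apply/allP => x /mapP[j]; rewrite mem_filter mem_iota add0n => /andP[_ /andP[_ jk]] ->.
exact: (window_string_nth_range n_window jk).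
Qed.

End Strings.

Lemma ctensor_delete2 (C : numClosedFieldType) (U : nat -> 'M[C]_4) O k n
    (q : seq 'I_2) mu i p1 p2 p3 :
  hermitian_mx O -> unitary_mx O -> unitary_mx (U (nth 0%N n i)) ->
  size n = k -> five_equal_at n i -> (i - 2 <= p1 < p2)%N -> (p2 < p3 <= i + 2)%N ->
  sigz C (nth 0 q p1) = sigz C (nth 0 q p2) -> sigz C (nth 0 q p2) = sigz C (nth 0 q p3) ->
  let J := [seq j <- iota 0 k | j \notin [:: p2; p3]] in
  ctensor U O k n q mu =
  (if (sign_bit mu p1 == sign_bit mu p2) && (sign_bit mu p2 == sign_bit mu p3)
   then 4 else 0)%:R *:
  ctensor U O (k - 2) (delete2 n p2 p3) (map (nth 0 q) J) (map (sign_bit mu) (behead J)).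
Proof.
move=> hO uO uU size_n [i2 [ik n_eq]] /andP[ip1 p12] /andP[p23 p3i] q12 q23 J.
set win := iota (i - 2) 5.
have iotaE : iota 0 k = iota 0 (i - 2) ++ win ++ iota (i + 3) (k - (i + 3)).
  have k_split : k = (i - 2 + (5 + (k - (i + 3))))%N by lia.
  by rewrite {1}k_split !iotaD add0n; congr (_ ++ _ ++ iota _ _); lia.
have htilde_win j : j \in win -> htilde_at U n q j = htilde U (nth 0 q j) (nth 0%N n i).
  by rewrite mem_iota /htilde_at => j_win; rewrite n_eq //; lia.
have p_win : {subset [:: p1; p2; p3] <= win}.
  by move=> j; rewrite /win mem_iota !inE; lia.
have size_J : size J = (k - 2)%N by apply: size_iota_notin2; lia.
have J0 : J = 0%N :: behead J.
  have k_pos : (0 < k)%N by lia.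
  by rewrite /J -(prednK k_pos) /= !inE; case: ifP => //; lia.
rewrite ctensor_toggles // iotaE (@toggles_three_in _ _ _ _ _ _ _ _ p1 p2 p3) -?iotaE -/J.
- rewrite (delete2E 0%N) size_n -/J -size_J J0 -ctensor_restrict //.
  by rewrite scaler_nat mulmxE mulrnAr.
- by rewrite iota_uniq.
- by move=> j j' /htilde_win-> /htilde_win->; apply: htilde_comm.
- by rewrite /= !inE; lia.
- by [].
- by rewrite !htilde_win ?p_win ?inE ?eqxx ?orbT // /htilde q12.
- by rewrite !htilde_win ?p_win ?inE ?eqxx ?orbT // /htilde q23.
by rewrite htilde_win ?p_win ?mem_head //; apply: htilde_invol.
Qed.

Lemma ctensor_five_reduction (C : numClosedFieldType) L k n (q : seq 'I_2) (mu : seq bool) :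
  (4 * L < k)%N -> window_string L k n ->
  exists i : nat, five_equal_at n i /\
    exists (j1 j2 : nat) (q' : seq 'I_2) (mu' : seq bool) (c : C),
      [/\ (i - 2 <= j1 < j2)%N, (j2 <= i + 2)%N,
          size q' = (k - 2)%N, size mu' = (k - 3)%N &
      forall (U : nat -> 'M[C]_4) (O : 'M[C]_4),
        (forall m, (1 <= m <= L)%N -> unitary_mx (U m)) ->
        hermitian_mx O -> unitary_mx O ->
        ctensor U O k n q mu = c *: ctensor U O (k - 2) (delete2 n j1 j2) q' mu'].
Proof.
move=> Lk n_window; have [size_n _] := n_window.
have [i five_i] := window_string_five_equal n_window Lk.
have [i2 [ik _]] := five_i.
have [p1 [p2 [p3 [ip1 p12 p23 p3i [q12 q23]]]]] :=
  pigeonhole_three (fun j => nth 0 q j == 0) (i - 2).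
set J := [seq j <- iota 0 k | j \notin [:: p2; p3]].
have size_J : size J = (k - 2)%N by apply: size_iota_notin2; lia.
exists i; split => //.
exists p2, p3, (map (nth 0 q) J), (map (sign_bit mu) (behead J)).
exists (if (sign_bit mu p1 == sign_bit mu p2) && (sign_bit mu p2 == sign_bit mu p3)
        then 4 else 0)%:R.
split; [lia | lia | by rewrite size_map | by rewrite size_map size_behead size_J; lia |].
move=> U O U_unitary hO uO; apply: (ctensor_delete2 mu hO uO _ size_n five_i) => //; try lia.
- by apply/U_unitary/(window_string_nth_range n_window); lia.
- by rewrite /sigz q12.
- by rewrite /sigz q23.
Qed.

Lemma ctensor_order_reduction (C : numClosedFieldType) L k n (q : seq 'I_2) (mu : seq bool) :
  (1 <= k)%N -> window_string L k n -> size q = k -> size mu = k.-1 ->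
  exists (k' : nat) (n' : seq nat) (q' : seq 'I_2) (mu' : seq bool) (c : C),
    [/\ (1 <= k' <= 4 * L)%N, window_string L k' n', size q' = k', size mu' = k'.-1 &
    forall (U : nat -> 'M[C]_4) (O : 'M[C]_4),
      (forall m, (1 <= m <= L)%N -> unitary_mx (U m)) ->
      hermitian_mx O -> unitary_mx O ->
      ctensor U O k n q mu = c *: ctensor U O k' n' q' mu'].
Proof.
have [K] := ubnP k; elim: K => // K IHK in k n q mu *.
move=> kK k_pos n_window size_q size_mu; have [size_n _] := n_window.
have [kL|Lk] := leqP k (4 * L).
  exists k, n, q, mu, 1; split; rewrite ?k_pos //.
  by move=> U O _ _ _; rewrite scale1r.
have [i [[i2 [ik _]] [j1 [j2 [q' [mu' [c [j12 j2i size_q' size_mu' reduce]]]]]]]] :=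
  ctensor_five_reduction C q mu Lk n_window.
have n'_window : window_string L (k - 2) (delete2 n j1 j2).
  by apply: window_string_delete2 => //; lia.
have [|||k' [n' [q'' [mu'' [c' [k'L n''_window size_q'' size_mu'' reduce']]]]]] :=
  IHK (k - 2)%N _ q' mu' _ _ n'_window size_q'; try lia.
exists k', n', q'', mu'', (c * c'); split => // U O U_unitary hO uO.
by rewrite reduce // reduce' // scalerA.
Qed.

Theorem mainTheorem4 (C : numClosedFieldType) (L : nat) (HL : (1 <= L)%N) :
  (forall (k : nat) (n : seq nat) (q : seq 'I_2) (mu : seq bool),
    (4 * L < k)%N -> window_string L k n ->
    size q = k -> size mu = k.-1 ->
    exists i : nat, five_equal_at n i /\
      exists (j1 j2 : nat) (q' : seq 'I_2) (mu' : seq bool) (c : C),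
        [/\ (i - 2 <= j1 < j2)%N, (j2 <= i + 2)%N,
            size q' = (k - 2)%N, size mu' = (k - 3)%N &
        forall (U : nat -> 'M[C]_4) (O : 'M[C]_4),
          (forall m, (1 <= m <= L)%N -> unitary_mx (U m)) ->
          hermitian_mx O -> unitary_mx O ->
          ctensor U O k n q mu
          = c *: ctensor U O (k - 2) (delete2 n j1 j2) q' mu']) /\
  (forall (k : nat) (n : seq nat) (q : seq 'I_2) (mu : seq bool),
    (1 <= k)%N -> window_string L k n -> size q = k -> size mu = k.-1 ->
    exists (k' : nat) (n' : seq nat) (q' : seq 'I_2) (mu' : seq bool) (c : C),
      [/\ (1 <= k' <= 4 * L)%N, window_string L k' n',
          size q' = k', size mu' = k'.-1 &
      forall (U : nat -> 'M[C]_4) (O : 'M[C]_4),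
        (forall m, (1 <= m <= L)%N -> unitary_mx (U m)) ->
        hermitian_mx O -> unitary_mx O ->
        ctensor U O k n q mu = c *: ctensor U O k' n' q' mu']).
Proof.
split=> k n q mu.
  by move=> Lk n_window _ _; exact: ctensor_five_reduction.
exact: ctensor_order_reduction.
Qed.
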